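(* Let $\sigma^2>0$, $\boldsymbol\beta\in\mathbb{R}^p$ not identically zero with $\beta_1\le\beta_2\le\cdots\le\beta_p$, $\delta_1^2,\dots,\delta_p^2>0$ with $\sum_{i=1}^p\beta_i/\delta_i^2\ge0$, and $\Sigma=\sigma^2\boldsymbol\beta\boldsymbol\beta^\top+\mathrm{diag}(\delta_1^2,\dots,\delta_p^2)$. Let $w$ be the long-only minimum variance portfolio (the minimizer of $w^\top\Sigma w$ subject to $\sum_i w_i=1$, $w_i\ge0$), $K=\{i:w_i>0\}$, $k=|K|$, and $C_K=\sum_{j\in K}\beta_j/\delta_j^2$. Then $K=\{1,2,\dots,k\}$ and $C_K\ge0$. *)

From HB Require Import structures.
From mathcomp Require Import all_boot all_order all_algebra.
Set Implicit Arguments. Unset Strict Implicit. Unset Printing Implicit Defensive.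
Import Order.TTheory GRing.Theory Num.Theory.
Local Open Scope ring_scope.

Definition one_factor_cov (R : realFieldType) (p : nat) (sigma2 : R)
  (beta delta2 : 'cV[R]_p) : 'M[R]_p :=
  sigma2 *: (beta *m beta^T) + diag_mx delta2^T.

Definition port_var (R : realFieldType) (p : nat) (S : 'M[R]_p) (w : 'cV[R]_p) : R :=
  (w^T *m S *m w) 0 0.

Definition long_only (R : realFieldType) (p : nat) (w : 'cV[R]_p) : Prop :=
  \sum_i w i 0 = 1 /\ forall i, 0 <= w i 0.

Definition is_LO_minvar (R : realFieldType) (p : nat) (S : 'M[R]_p) (w : 'cV[R]_p) : Prop :=
  long_only w /\ forall v : 'cV[R]_p, long_only v -> port_var S w <= port_var S v.

Definition support_set (R : realFieldType) (p : nat) (w : 'cV[R]_p) : {set 'I_p} :=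
  [set i | 0 < w i 0].

From HB Require Import structures.
From mathcomp Require Import all_boot all_order all_algebra.
From mathcomp Require Import ring lra.
Import Order.TTheory GRing.Theory Num.Theory.
Set Implicit Arguments. Unset Strict Implicit.
Local Open Scope ring_scope.

(* The gradient g := Sigma w satisfies the KKT conditions of the long-only
   problem: g_i >= lambda := w^T Sigma w for every i, with equality on the
   support K (shifting weight between two assets cannot lower the variance).
   In the one-factor model g_i = sigma^2 m beta_i + delta_i^2 w_i, where
   m = beta^T w.  Solving for w_i on K and summing beta_i w_i gives
     lambda C_K = m (1 + sigma^2 sum_(j in K) beta_j^2 / delta_j^2),
   so C_K has the sign of m.  If m < 0, then 0 < lambda <= sigma^2 m beta_j
   forces beta_j < 0 off K, whence C < 0; so m >= 0 and C_K >= 0.  Finally,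
   for i <= j with j in K and i not in K we would get
   lambda <= sigma^2 m beta_i <= sigma^2 m beta_j < lambda. *)

Lemma ge0_of_perturbation (R : realFieldType) (a c : R) :
  (forall e, 0 < e <= 1 -> 0 <= a + e * c) -> 0 <= a.
Proof.
move=> hperturb; rewrite leNgt; apply/negP => a_lt0.
pose e := - a / (`|c| - a).
have gap_gt0 : 0 < `|c| - a by rewrite subr_gt0 (lt_le_trans a_lt0).
have e_gt0 : 0 < e by rewrite divr_gt0 // oppr_gt0.
have e_le1 : e <= 1 by rewrite ler_pdivrMr // mul1r; have := normr_ge0 c; lra.
have ec_lt : e * c < - a.
  apply: le_lt_trans (ler_wpM2l (ltW e_gt0) (ler_norm c)) _.
  by rewrite /e mulrAC ltr_pdivrMr // ltr_pM2l ?oppr_gt0 // ltrDl oppr_gt0.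
by have := hperturb e; rewrite e_gt0 e_le1 => /(_ isT); lra.
Qed.

Lemma card_ord_lt p n : (n <= p)%N -> #|[set k : 'I_p | (k < n)%N]| = n.
Proof.
move=> le_np; have widen_inj : injective (widen_ord le_np).
  by move=> k l /(congr1 val) /= /val_inj.
rewrite -[RHS](card_ord n) -(card_imset _ widen_inj); apply: eq_card => k.
rewrite inE; apply/idP/imsetP => [lt_kn|[l _ ->]]; last exact: (ltn_ord l).
by exists (Ordinal lt_kn) => //; apply: val_inj.
Qed.

Lemma downset_ordE p (K : {set 'I_p}) :
  (forall i j : 'I_p, (i <= j)%N -> j \in K -> i \in K) ->
  K = [set i : 'I_p | (i < #|K|)%N].
Proof.
move=> down; apply/setP => i; rewrite inE; apply/idP/idP => [iK|].
  have : [set k : 'I_p | (k < i.+1)%N] \subset K.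
    by apply/subsetP => k; rewrite inE ltnS => /down; apply.
  by move/subset_leq_card; rewrite card_ord_lt.
apply: contraLR; rewrite -leqNgt => iK.
have : K \subset [set k : 'I_p | (k < i)%N].
  apply/subsetP => k kK; rewrite inE ltnNge.
  by apply: contra iK => le_ik; apply: down le_ik kK.
by move/subset_leq_card; rewrite card_ord_lt // ltnW.
Qed.

Section LongOnly.
Variables (R : realFieldType) (p : nat).
Implicit Types (w v : 'cV[R]_p).

Lemma long_only_segment w v e :
  long_only w -> long_only v -> 0 <= e <= 1 -> long_only (w + e *: (v - w)).
Proof.
move=> [w1 w0] [v1 v0] /andP[e0 e1]; split.
  rewrite (eq_bigr (fun i => (1 - e) * w i 0 + e * v i 0)); last first.
    by move=> i _; rewrite !mxE; ring.
  by rewrite big_split /= -!mulr_sumr w1 v1; ring.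
move=> i; rewrite !mxE; have := w0 i; have := v0 i; nra.
Qed.

Lemma long_only_support w : long_only w -> exists j, 0 < w j 0.
Proof.
move=> [w1 w0]; apply/existsP; apply: contraT; rewrite negb_exists => /forallP w_le0.
move: w1; rewrite big1 => [/eqP|i _]; first by rewrite eq_sym oner_eq0.
by apply/eqP; rewrite eq_le w0 andbT leNgt w_le0.
Qed.

Lemma long_only_off_support w j : long_only w -> ~~ (0 < w j 0) -> w j 0 = 0.
Proof. by move=> [_ w0]; rewrite lt_def w0 andbT negbK => /eqP. Qed.

End LongOnly.

Section MinimumVariance.
Variables (R : realFieldType) (p : nat) (S : 'M[R]_p).
Implicit Types (w u v : 'cV[R]_p).

Lemma port_var_segment w u e :
  port_var S (w + e *: u) =
  port_var S w + e * ((w^T *m S *m u + u^T *m S *m w) 0 0 + e * port_var S u).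
Proof.
rewrite /port_var [(w + _)^T]raddfD /= [(e *: u)^T]linearZ /=.
by rewrite !(mulmxDl, mulmxDr) -!scalemxAl -!scalemxAr !mxE; ring.
Qed.

Lemma port_var_sum w : port_var S w = \sum_i w i 0 * (S *m w) i 0.
Proof. by rewrite /port_var -mulmxA mxE; apply: eq_bigr => i _; rewrite mxE. Qed.

Lemma LO_minvar_first_order w v : is_LO_minvar S w -> long_only v ->
  0 <= (w^T *m S *m (v - w) + (v - w)^T *m S *m w) 0 0.
Proof.
move=> [hw hmin] hv; apply: (@ge0_of_perturbation _ _ (port_var S (v - w))).
move=> e /andP[e_gt0 e_le1].
have hx : long_only (w + e *: (v - w)).
  by apply: long_only_segment; rewrite // (ltW e_gt0).
by have := hmin _ hx; rewrite port_var_segment lerDl pmulr_rge0.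
Qed.

Hypothesis S_sym : S^T = S.

Lemma LO_minvar_variational w v : is_LO_minvar S w -> long_only v ->
  0 <= ((S *m w)^T *m (v - w)) 0 0.
Proof.
have gradT : (S *m w)^T = w^T *m S by rewrite trmx_mul S_sym.
have sym u : (u^T *m S *m w) 0 0 = ((S *m w)^T *m u) 0 0.
  have -> : (S *m w)^T *m u = (u^T *m S *m w)^T.
    by rewrite !trmx_mul trmxK S_sym mulmxA.
  by rewrite !mxE.
move=> hw /(LO_minvar_first_order hw); rewrite mxE sym -gradT -mulr2n.
by rewrite pmulrn_lge0.
Qed.

Lemma LO_minvar_grad_le w i j : is_LO_minvar S w -> 0 < w j 0 ->
  (S *m w) j 0 <= (S *m w) i 0.
Proof.
move=> hw wj_gt0.
pose v := w + w j 0 *: (delta_mx i 0 - delta_mx j 0).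
have hv : long_only v.
  split=> [|k]; last first.
    have [[_ w_ge0] _] := hw; rewrite !mxE !andbT.
    have [->|_] := eqVneq k j.
      by case: (j == i); rewrite ?subrr ?mulr0 ?addr0 // sub0r mulrN1 subrr.
    by rewrite subr0 addr_ge0 ?mulr_ge0 ?ler0n ?(ltW wj_gt0).
  under eq_bigr => k _ do rewrite !mxE !andbT.
  have sum_indicator l : \sum_(k < p) (k == l)%:R = 1 :> R.
    by rewrite (bigD1 l) //= eqxx big1 ?addr0 // => k /negbTE ->.
  have [[w1 _] _] := hw.
  by rewrite big_split /= -mulr_sumr sumrB !sum_indicator subrr mulr0 addr0.
have := LO_minvar_variational hw hv.
have -> : v - w = w j 0 *: (delta_mx i 0 - delta_mx j 0) by rewrite /v addrC addKr.
by rewrite -scalemxAr mulmxBr -!colE !mxE pmulr_rge0 // subr_ge0; apply.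
Qed.

Lemma LO_minvar_grad_support w j : is_LO_minvar S w -> 0 < w j 0 ->
  (S *m w) j 0 = port_var S w.
Proof.
move=> hw wj_gt0; have [[w1 _] _] := hw.
rewrite port_var_sum -[LHS]mul1r -w1 mulr_suml; apply: eq_bigr => k _.
have [wk_gt0|wk_le0] := boolP (0 < w k 0).
  by congr (_ * _); apply/eqP; rewrite eq_le !LO_minvar_grad_le.
by rewrite long_only_off_support ?mul0r //; case: hw.
Qed.

Lemma LO_minvar_grad_ge w i : is_LO_minvar S w -> port_var S w <= (S *m w) i 0.
Proof.
move=> hw; have [j wj_gt0] := long_only_support (proj1 hw).
by rewrite -(LO_minvar_grad_support hw wj_gt0) LO_minvar_grad_le.
Qed.

End MinimumVariance.

Definition exposure (R : pzRingType) p (beta w : 'cV[R]_p) := \sum_i beta i 0 * w i 0.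

Section OneFactor.
Variables (R : realFieldType) (p : nat) (s : R) (beta delta2 : 'cV[R]_p).
Local Notation S := (one_factor_cov s beta delta2).

Lemma one_factor_cov_sym : S^T = S.
Proof.
by rewrite /one_factor_cov raddfD /= linearZ /= trmx_mul trmxK tr_diag_mx.
Qed.

Lemma one_factor_grad w i :
  (S *m w) i 0 = s * exposure beta w * beta i 0 + delta2 i 0 * w i 0.
Proof.
rewrite /one_factor_cov mulmxDl -scalemxAl -mulmxA mul_diag_mx !mxE big_ord1 !mxE.
have -> : \sum_j beta^T 0 j * w j 0 = exposure beta w.
  by apply: eq_bigr => j _; rewrite mxE.
by rewrite mulrCA mulrC.
Qed.

Lemma port_var_one_factor w :
  port_var S w = s * exposure beta w ^+ 2 + \sum_i delta2 i 0 * w i 0 ^+ 2.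
Proof.
rewrite port_var_sum expr2 {2}/exposure !mulr_sumr -big_split /=.
by apply: eq_bigr => i _; rewrite one_factor_grad; ring.
Qed.

Variable w : 'cV[R]_p.
Hypotheses (s_gt0 : 0 < s) (delta2_gt0 : forall i, 0 < delta2 i 0).

Lemma one_factor_scale_gt0 (A : {pred 'I_p}) :
  0 < 1 + s * \sum_(j in A) beta j 0 ^+ 2 / delta2 j 0.
Proof.
apply: ltr_pwDl => //; rewrite mulr_ge0 ?(ltW s_gt0) //.
by apply: sumr_ge0 => j _; rewrite divr_ge0 ?sqr_ge0 ?(ltW (delta2_gt0 j)).
Qed.

Hypothesis w_opt : is_LO_minvar S w.

Local Notation K := (support_set w).
Local Notation m := (exposure beta w).
Local Notation lambda := (port_var S w).

Lemma one_factor_var_gt0 : 0 < lambda.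
Proof.
have [j wj_gt0] := long_only_support (proj1 w_opt).
rewrite port_var_one_factor; apply: ltr_wpDl.
  by rewrite mulr_ge0 ?sqr_ge0 ?(ltW s_gt0).
rewrite (bigD1 j) //=; apply: ltr_pwDl; first by rewrite mulr_gt0 ?exprn_gt0.
by apply: sumr_ge0 => i _; rewrite mulr_ge0 ?sqr_ge0 ?(ltW (delta2_gt0 i)).
Qed.

Lemma one_factor_support_weight j : j \in K ->
  delta2 j 0 * w j 0 = lambda - s * m * beta j 0.
Proof.
rewrite inE => /(LO_minvar_grad_support one_factor_cov_sym w_opt) <-.
by rewrite one_factor_grad addrC addKr.
Qed.

Lemma one_factor_off_support j : j \notin K -> lambda <= s * m * beta j 0.
Proof.
rewrite inE => /(long_only_off_support (proj1 w_opt)) wj0.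
have := LO_minvar_grad_ge one_factor_cov_sym j w_opt.
by rewrite one_factor_grad wj0 mulr0 addr0.
Qed.

Lemma one_factor_support_identity :
  lambda * \sum_(j in K) beta j 0 / delta2 j 0 =
  m * (1 + s * \sum_(j in K) beta j 0 ^+ 2 / delta2 j 0).
Proof.
have exposure_support : \sum_(j in K) beta j 0 * w j 0 = m.
  rewrite /exposure [RHS](bigID (mem K)) /= [X in _ = _ + X]big1 ?addr0 // => j.
  by rewrite inE => /(long_only_off_support (proj1 w_opt)) ->; rewrite mulr0.
rewrite mulrDr mulr1 -{1}exposure_support !mulr_sumr -big_split /=.
apply: eq_bigr => j jK.
have -> : lambda = delta2 j 0 * w j 0 + s * m * beta j 0.
  by rewrite one_factor_support_weight // subrK.
by field; rewrite gt_eqF.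
Qed.

Hypothesis C_ge0 : 0 <= \sum_i beta i 0 / delta2 i 0.

Lemma one_factor_exposure_ge0 : 0 <= m.
Proof.
rewrite leNgt; apply/negP => m_lt0.
have CK_lt0 : \sum_(j in K) beta j 0 / delta2 j 0 < 0.
  rewrite -(pmulr_rlt0 _ one_factor_var_gt0) one_factor_support_identity.
  by rewrite nmulr_rlt0 // one_factor_scale_gt0.
have Cout_le0 : \sum_(j | j \notin K) beta j 0 / delta2 j 0 <= 0.
  apply: sumr_le0 => j /one_factor_off_support /(lt_le_trans one_factor_var_gt0).
  by rewrite nmulr_rgt0 ?pmulr_rlt0 // ler_pdivrMr // mul0r => /ltW.
by move: C_ge0; rewrite (bigID [pred j | j \in K]) /=; lra.
Qed.

Lemma one_factor_support_down_closed :
  (forall i j : 'I_p, (i <= j)%N -> beta i 0 <= beta j 0) ->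
  forall i j : 'I_p, (i <= j)%N -> j \in K -> i \in K.
Proof.
move=> beta_sorted i j le_ij jK; apply: contraT => /one_factor_off_support.
have sm_ge0 : 0 <= s * m by rewrite mulr_ge0 ?(ltW s_gt0) ?one_factor_exposure_ge0.
have := ler_wpM2l sm_ge0 (beta_sorted _ _ le_ij).
have := one_factor_support_weight jK.
have : 0 < delta2 j 0 * w j 0 by rewrite mulr_gt0 //; move: jK; rewrite inE.
lra.
Qed.

Lemma one_factor_support_exposure_ge0 : 0 <= \sum_(j in K) beta j 0 / delta2 j 0.
Proof.
rewrite -(pmulr_rge0 _ one_factor_var_gt0) one_factor_support_identity.
by rewrite mulr_ge0 ?one_factor_exposure_ge0 // ltW ?one_factor_scale_gt0.
Qed.

End OneFactor.

Unset Implicit Arguments.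

Theorem lemma2 (R : realFieldType) (p : nat) (sigma2 : R) (beta delta2 : 'cV[R]_p)
  (w : 'cV[R]_p) :
  0 < sigma2 ->
  beta != 0 ->
  (forall i j : 'I_p, (i <= j)%N -> beta i 0 <= beta j 0) ->
  (forall i : 'I_p, 0 < delta2 i 0) ->
  0 <= \sum_i beta i 0 / delta2 i 0 ->
  is_LO_minvar (one_factor_cov sigma2 beta delta2) w ->
  support_set w = [set i : 'I_p | (i < #|support_set w|)%N] /\
  0 <= \sum_(j in support_set w) beta j 0 / delta2 j 0.
Proof.
move=> sigma2_gt0 _ beta_sorted delta2_gt0 C_ge0 w_opt.
split; last exact: one_factor_support_exposure_ge0 sigma2_gt0 delta2_gt0 w_opt C_ge0.
apply: downset_ordE.
exact: one_factor_support_down_closed sigma2_gt0 delta2_gt0 w_opt C_ge0 beta_sorted.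
Qed.
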